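(* If $G$ is a circulant graph, then $\operatorname{stww}(G)\leq 3\Delta(G)+1$.
   Context: All graphs are finite and simple. A graph $G$ is circulant if there is an automorphism $\varphi$ of $G$ such that for any two vertices $v,w$ there is $j\in\mathbb{N}$ with $\varphi^j(v)=w$. $\Delta(G)$ is the maximum degree. A trigraph is a graph whose edges are each colored red or black; a graph is viewed as a trigraph with all edges black. The red degree of a vertex is the number of red edges incident to it. For a partition $\mathcal{P}$ of $V(G)$, the quotient trigraph $G/\mathcal{P}$ has vertex set $\mathcal{P}$; two distinct parts $U,W$ are joined by a black edge if every pair $\{u,w\}$ with $u\in U,w\in W$ is a black edge of $G$, are non-adjacent if no such pair is an edge of $G$, and are joined by a red edge otherwise. A contraction sequence of an $n$-vertex trigraph $G$ is a sequence $\mathcal{P}_n,\dots,\mathcal{P}_1$ of partitions of $V(G)$ where $\mathcal{P}_n$ is the partition into singletons and each $\mathcal{P}_i$ arises from $\mathcal{P}_{i+1}$ by merging two parts; its width is the maximum red degree over all $G/\mathcal{P}_i$, and the twin-width $\operatorname{tww}(G)$ is the minimum width of a contraction sequence. The sparse twin-width is $\operatorname{stww}(G)\coloneqq\operatorname{tww}(G_{\mathrm{red}})$, where $G_{\mathrm{red}}$ is the trigraph obtained from $G$ by coloring all edges red. *)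

From mathcomp Require Import all_boot fingroup perm.
Set Implicit Arguments. Unset Strict Implicit. Unset Printing Implicit Defensive.

Section TwinWidth.
Variable T : finType.

(* A simple graph on T is a symmetric irreflexive relation e : rel T. *)

Definition is_automorphism (e : rel T) (phi : {perm T}) : Prop :=
  forall x y, e (phi x) (phi y) = e x y.

Definition circulant (e : rel T) : Prop :=
  exists phi : {perm T}, is_automorphism e phi /\
    forall v w : T, exists j : nat, iter j phi v = w.

Definition max_degree (e : rel T) : nat := \max_(v : T) #|[set w | e v w]|.

Record trigraph := Trigraph { black : rel T; red : rel T }.

Definition tedge (G : trigraph) (u w : T) : bool := black G u w || red G u w.

(* Red edge between two parts U, W of the quotient trigraph. *)
Definition qred (G : trigraph) (U W : {set T}) : bool :=
  [&& U != W,
      ~~ [forall u in U, forall w in W, black G u w] &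
      [exists u in U, exists w in W, tedge G u w]].

Definition red_degree (G : trigraph) (P : {set {set T}}) (U : {set T}) : nat :=
  #|[set W in P | qred G U W]|.

Definition max_red_degree (G : trigraph) (P : {set {set T}}) : nat :=
  \max_(U in P) red_degree G P U.

Definition singletons : {set {set T}} := [set [set x] | x : T].

Definition merge_step (P Q : {set {set T}}) : bool :=
  [exists A in P, exists B in P,
     (A != B) && (Q == ((P :\ A) :\ B) :|: [set A :|: B])].

(* A contraction sequence P_n, ..., P_1 (listed from P_n), n = #|T|. *)
Definition contraction_seq (s : #|T|.-tuple {set {set T}}) : bool :=
  (0 < #|T|) ==>
   ((nth set0 s 0 == singletons) &&
   [forall i : 'I_#|T|.-1, merge_step (nth set0 s i) (nth set0 s i.+1)]).

Definition cs_width (G : trigraph) (s : seq {set {set T}}) : nat :=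
  \max_(P <- s) max_red_degree G P.

(* Twin-width: minimum width of a contraction sequence
   (the default #|T| is never smaller than a width, and contraction
   sequences always exist). *)
Definition tww (G : trigraph) : nat :=
  \big[minn/#|T|]_(s : #|T|.-tuple {set {set T}} | contraction_seq s)
     cs_width G s.

Definition red_trigraph (e : rel T) : trigraph :=
  Trigraph (fun _ _ => false) e.

Definition stww (e : rel T) : nat := tww (red_trigraph e).

End TwinWidth.

From mathcomp Require Import all_boot fingroup perm zify.
Set Implicit Arguments. Unset Strict Implicit. Unset Printing Implicit Defensive.

(* Number the vertices 0, ..., n-1 along the orbit of the circulant
   automorphism, so that adjacency only depends on the difference of positions
   modulo n.  We contract intervals: cut the positions into blocks of length L,
   merge consecutive pairs of blocks one pair at a time, and double L once all
   pairs are merged.  At every stage each part is a union of L-blocks inside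
   one aligned window of 2L positions.  The neighbours of a part are reached by
   shifting its window by one of the at most Δ neighbour offsets of vertex 0,
   and a shifted window meets the part of position 0 plus at most three others:
   after its first position, the window can only enter such a part at a
   nonzero multiple of L, and two of these are at least L apart, even across
   position 0, so the window contains at most two of them. *)
Section Fibers.
Variable T : finType.
Implicit Types (P Q : {set {set T}}).

Lemma merge_step_card (D : {set T}) P Q :
  partition P D -> merge_step P Q -> #|Q| = #|P|.-1.
Proof.
case/and3P=> _ /trivIsetP tiP P0.
case/existsP=> A /andP[PA /existsP[B /and3P[PB neAB /eqP->]]].
have AB_new : A :|: B \notin P :\ A :\ B.
  rewrite !in_setD1; apply/negP => /and3P[_ neA P_AB].
  have /set0Pn[x Ax] : A != set0 by apply: contraNneq P0 => <-.
  have := tiP _ _ P_AB PA neA; rewrite -setI_eq0 => /eqP/setP/(_ x).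
  by rewrite !inE Ax.
rewrite setUC cardsU1 AB_new (cardsD1 A P) PA (cardsD1 B (P :\ A)).
by rewrite in_setD1 PB eq_sym neAB.
Qed.

Definition fiber (rT : eqType) (f : T -> rT) (x : T) : {set T} :=
  [set y | f y == f x].

Definition fibers (rT : eqType) (f : T -> rT) : {set {set T}} :=
  [set fiber f x | x : T].

Section OneMap.
Variables (rT : eqType) (f : T -> rT).

Lemma mem_fiber x : x \in fiber f x.
Proof. by rewrite inE. Qed.

Lemma eq_fiber x y : (fiber f x == fiber f y) = (f x == f y).
Proof.
apply/eqP/eqP => [E|E]; last by apply/setP => z; rewrite !inE E.
by have := mem_fiber x; rewrite E inE => /eqP.
Qed.

Lemma fibers_partition : partition (fibers f) [set: T].
Proof.
have -> : fibers f = preim_partition f [set: T].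
  apply/setP => C; apply/imsetP/imsetP => -[x _ ->]; exists x => //;
  by apply/setP => y; rewrite !inE eq_sym.
exact: preim_partitionP.
Qed.

Lemma fibers_inj : injective f -> fibers f = singletons T.
Proof.
move=> f_inj; apply/setP => C; apply/imsetP/imsetP => -[x _ ->]; exists x => //;
by apply/setP => y; rewrite !inE (inj_eq f_inj).
Qed.

Lemma card_fibers_const : (forall x y, f x = f y) -> #|fibers f| <= 1.
Proof.
move=> f_const; rewrite -(cards1 [set: T]); apply/subset_leq_card/subsetP.
move=> _ /imsetP[x _ ->]; rewrite inE; apply/eqP/setP => y.
by rewrite !inE (f_const y x) eqxx.
Qed.

Lemma eq_fibers (rT' : eqType) (f' : T -> rT') :
  (forall x y, (f x == f y) = (f' x == f' y)) -> fibers f = fibers f'.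
Proof.
move=> ff'; apply/setP => C; apply/imsetP/imsetP => -[x _ ->]; exists x => //;
by apply/setP => y; rewrite !inE ff'.
Qed.

Lemma merge_step_fibers (rT' : eqType) (f' : T -> rT') x1 x2 :
  f x1 != f x2 ->
  (forall x y, (f' x == f' y) =
     (f x == f y) || [&& f x \in [:: f x1; f x2] & f y \in [:: f x1; f x2]]) ->
  merge_step (fibers f) (fibers f').
Proof.
move=> ne12 f'E; set A := fiber f x1; set B := fiber f x2.
have fiber' x : fiber f' x = if f x \in [:: f x1; f x2] then A :|: B else fiber f x.
  apply/setP => y; rewrite [y \in fiber f' x]inE f'E.
  case: ifP => [xAB|_]; rewrite ?andbT ?andbF ?orbF !inE //.
  by move: xAB; rewrite !inE => /orP[]/eqP->; case: (f y == f x1); case: (f y == f x2).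
apply/existsP; exists A; rewrite imset_f //=; apply/existsP; exists B.
rewrite imset_f //= eq_fiber ne12 /=; apply/eqP/setP => C; rewrite !inE.
apply/imsetP/idP => [[x _ ->]|].
  rewrite fiber' !inE; case: ifPn => [_|xAB]; first by rewrite eqxx orbT.
  by rewrite /A /B !eq_fiber imset_f // andbT; move: xAB; rewrite negb_or andbC => ->.
case/orP => [/and3P[neB neA /imsetP[x _ Cx]]|/eqP->]; last first.
  by exists x1 => //; rewrite fiber' mem_head.
by exists x => //; rewrite fiber' !inE -!eq_fiber -/A -/B -Cx (negbTE neA) (negbTE neB).
Qed.

End OneMap.
End Fibers.

Section ContractionSequences.
Variable T : finType.
Implicit Types (G : trigraph T) (P Q : {set {set T}}).

Lemma tww_le_card G : tww G <= #|T|.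
Proof.
by rewrite /tww; elim/big_rec: _ => // s m _ le_m; rewrite geq_min le_m orbT.
Qed.

Lemma tww_le_width G (s : #|T|.-tuple {set {set T}}) :
  contraction_seq s -> tww G <= cs_width G s.
Proof.
rewrite /tww => cs; have : s \in index_enum _ := mem_index_enum s.
elim: (index_enum _) => // s' r IH; rewrite inE big_cons.
case/predU1P => [<-|/IH le_r]; first by rewrite cs geq_minl.
by case: ifP => // _; rewrite geq_min le_r orbT.
Qed.

Variable good : {set {set T}} -> Prop.
Hypothesis good_partition : forall P, good P -> partition P [set: T].
Hypothesis good_merge :
  forall P, good P -> 1 < #|P| -> exists2 Q, merge_step P Q & good Q.

Lemma merge_chain m P : good P -> #|P| = m.+1 ->
  exists s : seq {set {set T}}, [/\ size s = m.+1, nth set0 s 0 = P,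
    (forall i, i < m -> merge_step (nth set0 s i) (nth set0 s i.+1)) &
    (forall Q, Q \in s -> good Q)].
Proof.
elim: m P => [|m IH] P goodP cardP.
  by exists [:: P]; split=> // Q; rewrite inE => /eqP->.
have [|Q PQ goodQ] := good_merge goodP; first by rewrite cardP.
have cardQ : #|Q| = m.+1 by rewrite (merge_step_card (good_partition goodP) PQ) cardP.
have [s [size_s s0 s_merge s_good]] := IH Q goodQ cardQ.
exists (P :: s); split => /=; rewrite ?size_s //.
  by case=> [|i] /= lt_im; [rewrite s0 | exact: s_merge].
by move=> R /predU1P[->|/s_good].
Qed.

Lemma tww_le_of_merges G k :
  good (singletons T) -> (forall P, good P -> max_red_degree G P <= k) ->
  tww G <= k.
Proof.
move=> good1 good_width.
have [T0|T_gt0] := posnP #|T|; first by rewrite (leq_trans (tww_le_card G)) ?T0.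
have card1 : #|singletons T| = #|T|.-1.+1.
  by rewrite prednK // card_imset //; exact: set1_inj.
have [s [size_s s0 s_merge s_good]] := merge_chain good1 card1.
have size_s' : size s == #|T| by rewrite size_s prednK.
apply: leq_trans (tww_le_width G (s := Tuple size_s') _) _.
  rewrite /contraction_seq T_gt0 /= s0 eqxx; apply/forallP => i.
  exact: s_merge.
by apply/bigmax_leqP_seq => P sP _; exact/good_width/s_good.
Qed.

End ContractionSequences.

Lemma leq_card_bigcup (I T : finType) (A : {pred I}) (F : I -> {set T}) :
  #|\bigcup_(i in A) F i| <= \sum_(i in A) #|F i|.
Proof.
apply: (big_rec2 (fun (X : {set T}) k => #|X| <= k)); first by rewrite cards0.
by move=> i X k _ le_Xk; rewrite (leq_trans (leq_card_setU _ _)) ?leq_add2l.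
Qed.

Lemma divn_predn m d : 0 < d -> ~~ (d %| m) -> m.-1 %/ d = m %/ d.
Proof. by case: m => [|m] d_gt0; rewrite ?dvdn0 // divnS // => /negbTE->. Qed.

Lemma half_divn m d : (m %/ d)./2 = m %/ d.*2.
Proof. by rewrite -divn2 -divnMA muln2. Qed.

Lemma modn_dvdn_gap n L c p p' : p < p' < p + n -> 0 < (p' + c) %% n ->
  L %| (p + c) %% n -> L %| (p' + c) %% n -> p + L <= p'.
Proof.
move=> /andP[lt_pp' lt_p'n] r'_gt0 L_r L_r'.
have r_lt : (p + c) %% n < n by rewrite ltn_pmod //; lia.
have shift : (p' + c) %% n = ((p + c) %% n + (p' - p)) %% n.
  by rewrite modnDml addnAC subnKC // ltnW.
rewrite {}shift in r'_gt0 L_r'; move: ((p + c) %% n) r_lt L_r r'_gt0 L_r' => r.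
have [small|large] := ltnP (r + (p' - p)) n => r_lt L_r r'_gt0 L_r'.
  rewrite modn_small // dvdn_addr // in L_r'.
  by have := dvdn_leq _ L_r'; lia.
have wrap : (r + (p' - p)) %% n = r + (p' - p) - n.
  by rewrite -[in LHS](subnK large) modnDr modn_small //; lia.
by rewrite wrap in r'_gt0 L_r'; have := dvdn_leq r'_gt0 L_r'; lia.
Qed.

Lemma last_break (A : eqType) (f : nat -> A) (B : pred nat) z a :
  (forall p, a < p -> f p != z -> ~~ B p -> f p.-1 = f p) ->
  forall p, a <= p -> f p != z ->
  exists2 q, a <= q <= p & ((q == a) || B q) && (f q == f p).
Proof.
move=> step; elim=> [|p IH] le_ap fp_z.
  by exists 0; rewrite ?eqxx //; move: le_ap; rewrite leqn0 => /eqP->.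
have [lt_ap|ge_ap] := ltnP a p.+1; last first.
  have -> : a = p.+1 by lia.
  by exists p.+1; rewrite ?leqnn ?eqxx.
have [Bp|nBp] := boolP (B p.+1).
  by exists p.+1; rewrite ?(ltnW lt_ap) ?leqnn ?eqxx ?Bp ?orbT.
have fp := step _ lt_ap fp_z nBp; rewrite -fp in fp_z *.
have [q /andP[le_aq le_qp] qP] := IH lt_ap fp_z.
by exists q; rewrite ?le_aq ?(leqW le_qp).
Qed.

(* The label of the [q]-th block once the first [t] pairs of blocks are merged. *)
Definition pair_label (t q : nat) : nat := if q < t.*2 then q./2 else q - t.

Lemma pair_label_half t i j : pair_label t i = pair_label t j -> i./2 = j./2.
Proof. by rewrite /pair_label; case: ifP; case: ifP => *; lia. Qed.

Lemma pair_label_succ t i j :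
  (pair_label t.+1 i == pair_label t.+1 j) =
  (pair_label t i == pair_label t j) ||
  [&& pair_label t i \in [:: t; t.+1] & pair_label t j \in [:: t; t.+1]].
Proof. by rewrite /pair_label !inE; do 4!case: ifP => ?; lia. Qed.

Lemma pair_label0 q : pair_label 0 q = q.
Proof. by rewrite /pair_label subn0. Qed.

Lemma pair_label_small t q : q <= t.*2 -> pair_label t q = q./2.
Proof. by rewrite /pair_label; case: ifP => *; lia. Qed.

Section Circulant.
Variables (T : finType) (e : rel T) (phi : {perm T}) (x0 : T).
Hypothesis phi_aut : is_automorphism e phi.
Hypothesis phi_orbit : forall y, fconnect phi x0 y.

Local Notation n := #|T|.

Definition vtx (j : nat) : T := iter j phi x0.
Definition pos (x : T) : nat := findex phi x0 x.

Lemma order_orbit : fingraph.order phi x0 = n.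
Proof.
apply/eqP; rewrite eqn_leq max_card /fingraph.order; apply/subset_leq_card/subsetP.
by move=> y _; exact: phi_orbit.
Qed.

Lemma pos_lt x : pos x < n.
Proof. by rewrite -order_orbit findex_max. Qed.

Lemma vtx_pos : cancel pos vtx.
Proof. by move=> x; exact: iter_findex. Qed.

Lemma pos_inj : injective pos.
Proof. exact: can_inj vtx_pos. Qed.

Lemma pos_vtx j : j < n -> pos (vtx j) = j.
Proof. by rewrite -order_orbit; exact: findex_iter. Qed.

Lemma vtx_modn j : vtx (j %% n) = vtx j.
Proof.
have cycle : iter n phi x0 = x0.
  by rewrite -{1}order_orbit iter_order //; exact: perm_inj.
by rewrite /vtx {2}(divn_eq j n) addnC iterD iterM (iter_fix _ cycle).
Qed.

Lemma edge_iter k x y : e (iter k phi x) (iter k phi y) = e x y.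
Proof. by elim: k => //= k IH; rewrite phi_aut. Qed.

Lemma edge_shift u w : e u w -> exists2 v, e x0 v & w = vtx ((pos u + pos v) %% n).
Proof.
move=> euw; set d := (pos w + n - pos u) %% n.
have d_lt : d < n by rewrite ltn_pmod // (leq_ltn_trans _ (pos_lt u)).
have shift : (pos u + d) %% n = pos w.
  rewrite modnDmr (_ : pos u + _ = pos w + n); last by have := pos_lt u; lia.
  by rewrite modnDr modn_small ?pos_lt.
exists (vtx d); last by rewrite pos_vtx // shift vtx_pos.
rewrite -(edge_iter (pos u)) -/(vtx _) vtx_pos /vtx -iterD -/(vtx _).
by rewrite -vtx_modn shift vtx_pos.
Qed.

Section RedDegree.
Variables (L : nat) (g : nat -> nat).
Hypotheses (L_gt0 : 0 < L) (g_half : forall i j, g i = g j -> i./2 = j./2).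

Let label x := g (pos x %/ L).
Let F := fiber label x0.

Definition window a := [set p : 'I_n | a <= p < a + L.*2].

Definition window_parts a d := [set W in fibers label |
  (W != F) && [exists p in window a, vtx ((p + d) %% n) \in W]].

(* Position [0] is left out: it lies in [F], which is counted separately. *)
Definition breakpoints a d := [set p in window a |
  (p == a :> nat) || (0 < (p + d) %% n) && (L %| (p + d) %% n)].

Lemma label_vtx q : q < n -> label (vtx q) = g (q %/ L).
Proof. by move=> q_lt; rewrite /label pos_vtx. Qed.

Lemma card_breakpoints a d : #|breakpoints a d| <= 3.
Proof.
(* Breakpoints after [a] are [L] apart, so at most one lies on each side of
   [a + L]. *)
pose side (p : 'I_n) := if p == a :> nat then None else Some (a + L < p).
have gap (p p' : 'I_n) : p \in breakpoints a d -> p' \in breakpoints a d ->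
    p != a :> nat -> p' != a :> nat -> p < p' -> p + L <= p'.
  rewrite !inE => /andP[_ Bp] /andP[_ Bp'] /negbTE pa /negbTE p'a lt_pp'.
  rewrite pa p'a /= in Bp Bp'; case/andP: Bp => _ L_p; case/andP: Bp' => p'_gt0 L_p'.
  by apply: modn_dvdn_gap p'_gt0 L_p L_p'; rewrite lt_pp' /= ltn_addl.
rewrite (_ : 3 = #|{: option bool}|); last by rewrite card_option card_bool.
apply: (leq_card_in side) => p p' Bp Bp'.
have := Bp; have := Bp'; rewrite !inE.
move=> /andP[/andP[le_ap' lt_p'] _] /andP[/andP[le_ap lt_p] _].
rewrite /side; case: eqP => [pa|/eqP pa]; case: eqP => [p'a|/eqP p'a] //.
  by move=> _; apply: val_inj; rewrite /= pa p'a.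
case=> same_side; apply: ord_inj.
have := gap _ _ Bp Bp' pa p'a; have := gap _ _ Bp' Bp p'a pa.
move: same_side pa p'a le_ap lt_p le_ap' lt_p'.
by move: (nat_of_ord p) (nat_of_ord p'); lia.
Qed.

Lemma window_parts_sub a d :
  window_parts a d \subset
    [set fiber label (vtx ((p + d) %% n)) | p : 'I_n in breakpoints a d].
Proof.
apply/subsetP => W; rewrite inE => /andP[/imsetP[y _ ->] /andP[neF /existsP[p]]].
rewrite !inE => /andP[/andP[le_ap lt_p] /eqP yp].
pose f q := g (((q + d) %% n) %/ L).
have n_gt0 : 0 < n by apply: leq_ltn_trans (ltn_ord p).
have f_label q : label (vtx ((q + d) %% n)) = f q by rewrite label_vtx ?ltn_pmod.
have f0 : label x0 = g 0 by rewrite /label /pos findex0 div0n.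
have fp : f p != g 0.
  by apply: contraNneq neF => fp0; rewrite /F eq_fiber f0 -fp0 -f_label yp.
have step q : a < q -> f q != g 0 -> ~~ ((0 < (q + d) %% n) && (L %| (q + d) %% n)) ->
    f q.-1 = f q.
  move=> lt_aq fq; rewrite lt0n; have [r0|r_gt0] /= := eqVneq ((q + d) %% n) 0.
    by rewrite /f r0 div0n eqxx in fq.
  move=> nLr; rewrite /f (_ : (q.-1 + d) %% n = ((q + d) %% n).-1) ?divn_predn //.
  move: r_gt0; rewrite -(prednK (leq_ltn_trans (leq0n a) lt_aq)) addSn modnS.
  by case: ifP.
have [q /andP[le_aq le_qp] /andP[Bq /eqP fq]] := last_break step le_ap fp.
have q_lt : q < n by apply: leq_ltn_trans le_qp _.
apply/imsetP; exists (Ordinal q_lt).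
  by rewrite !inE le_aq (leq_ltn_trans le_qp lt_p).
by apply/eqP; rewrite eq_fiber f_label -yp f_label fq.
Qed.

Lemma card_window_parts a d : #|window_parts a d| <= 3.
Proof.
apply: leq_trans (subset_leq_card (window_parts_sub a d)) _.
exact: leq_trans (leq_imset_card _ _) (card_breakpoints a d).
Qed.

Lemma red_degree_fibers U : U \in fibers label ->
  red_degree (red_trigraph e) (fibers label) U <= 3 * max_degree e + 1.
Proof.
case/imsetP => y _ ->; set a := pos y %/ L.*2 * L.*2.
have in_window u : u \in fiber label y -> Ordinal (pos_lt u) \in window a.
  rewrite inE => /eqP/g_half; rewrite !half_divn => same_block.
  by rewrite inE /= /a -same_block leq_divM addnC -mulSn ltn_ceil ?double_gt0.
have sub : [set W in fibers label | qred (red_trigraph e) (fiber label y) W]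
    \subset F |: \bigcup_(v in [set w | e x0 w]) window_parts a (pos v).
  apply/subsetP => W; rewrite inE => /andP[PW].
  case/and3P => _ _ /existsP[u /andP[yu /existsP[w /andP[Ww /= euw]]]].
  rewrite in_setU1; case: eqVneq => //= neF.
  have [v x0v wE] := edge_shift euw; rewrite wE in Ww.
  apply/bigcupP; exists v; rewrite ?inE // PW neF /=.
  by apply/existsP; exists (Ordinal (pos_lt u)); rewrite in_window.
apply: leq_trans (subset_leq_card sub) _.
rewrite cardsU1 addnC leq_add ?leq_b1 //.
apply: leq_trans (leq_card_bigcup _ _) _.
apply: (@leq_trans (\sum_(v in [set w | e x0 w]) 3)).
  by apply: leq_sum => v _; exact: card_window_parts.
rewrite sum_nat_const mulnC leq_mul2l /=.
exact: (@leq_bigmax _ (fun v => #|[set w | e v w]|) x0).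
Qed.

End RedDegree.

Definition stage L t := fibers (fun x => pair_label t (pos x %/ L)).

Definition staged P := exists L t, 0 < L /\ P = stage L t.

Lemma stage_singletons : stage 1 0 = singletons T.
Proof.
by apply: fibers_inj => x y; rewrite !pair_label0 !divn1; exact: pos_inj.
Qed.

Lemma stage_merge L t : 0 < L -> t.*2.+1 * L < n ->
  merge_step (stage L t) (stage L t.+1).
Proof.
move=> L_gt0 lt_n; have lt_n' : t.*2 * L < n by apply: leq_ltn_trans lt_n; lia.
have lab1 : pair_label t (pos (vtx (t.*2 * L)) %/ L) = t.
  by rewrite pos_vtx // mulnK // /pair_label ltnn; lia.
have lab2 : pair_label t (pos (vtx (t.*2.+1 * L)) %/ L) = t.+1.
  by rewrite pos_vtx // mulnK // /pair_label ltnNge leqnSn /=; lia.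
apply: merge_step_fibers (vtx (t.*2 * L)) (vtx (t.*2.+1 * L)) _ _.
  by rewrite lab1 lab2 neq_ltn ltnSn.
by move=> x y; rewrite lab1 lab2 pair_label_succ.
Qed.

Lemma stage_double L t : 0 < L -> n <= t.*2.+1 * L -> stage L t = stage L.*2 0.
Proof.
move=> L_gt0 le_n; apply: eq_fibers => x y; rewrite !pair_label0 -!half_divn.
have small z : pos z %/ L <= t.*2 by rewrite -ltnS ltn_divLR // (leq_trans (pos_lt z)).
by rewrite !pair_label_small.
Qed.

Lemma card_stage_coarsest L : n <= L -> #|stage L 0| <= 1.
Proof.
move=> le_nL; apply: card_fibers_const => x y.
by rewrite !divn_small ?(leq_trans (pos_lt _)).
Qed.

Lemma staged_merge P : staged P -> 1 < #|P| -> exists2 Q, merge_step P Q & staged Q.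
Proof.
case=> L [t [L_gt0 ->]] many.
have [lt_n|le_n] := ltnP (t.*2.+1 * L) n.
  by exists (stage L t.+1); [exact: stage_merge | exists L, t.+1].
have L2_gt0 : 0 < L.*2 by rewrite double_gt0.
rewrite stage_double // in many *.
have [lt_n2|le_n2] := ltnP L.*2 n.
  by exists (stage L.*2 1); [apply: stage_merge; rewrite ?mul1n | exists L.*2, 1].
by have := card_stage_coarsest le_n2; rewrite leqNgt many.
Qed.

Lemma staged_partition P : staged P -> partition P [set: T].
Proof. by case=> L [t [_ ->]]; exact: fibers_partition. Qed.

Lemma staged_red_degree P : staged P ->
  max_red_degree (red_trigraph e) P <= 3 * max_degree e + 1.
Proof.
case=> L [t [L_gt0 ->]]; apply/bigmax_leqP => U PU.
exact: red_degree_fibers (@pair_label_half t) _ PU.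
Qed.

End Circulant.

Theorem mainTheorem3 (T : finType) (e : rel T)
  (e_sym : symmetric e) (e_irr : irreflexive e) :
  circulant e -> stww e <= 3 * max_degree e + 1.
Proof.
case=> phi [phi_aut phi_transitive].
have [x0 _|T0] := pickP T; last first.
  by rewrite (leq_trans (tww_le_card _)) // eq_card0.
have orbit y : fconnect phi x0 y.
  by have [j <-] := phi_transitive x0 y; exact: fconnect_iter.
apply: (tww_le_of_merges (good := staged phi x0)).
- exact: staged_partition.
- exact: staged_merge.
- by exists 1, 0; rewrite stage_singletons.
- exact: staged_red_degree.
Qed.
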